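(* Let $n\ge1$, $N=\{1,\dots,n\}$, $A=[0,1]$, and let $f$ be an OWA mechanism. If $f$ satisfies proportionality (P) (equivalently, PF, or UFS) then $f$ satisfies individual fair share (IFS); and if $f$ satisfies IFS then $f$ satisfies unanimity (UN).
   Context: A mechanism is a map $f:A^n\to A$ from profiles $x=(x_i)_{i\in N}$ of reported locations to a facility location. An OWA mechanism has weights $w_1,\dots,w_n\in[0,1]$ with $\sum_j w_j=1$ and returns $f(x)=\sum_{j=1}^n w_j x_{\pi(j)}$, where $\pi$ is a permutation of $N$ with $x_{\pi(1)}\le\dots\le x_{\pi(n)}$. P: for every $x\in\{0,1\}^n$, $f(x)=\#\{i: x_i=1\}/n$. PF: for every $x$, nonempty $S\subseteq N$, $i\in S$: $|x_i-f(x)|\le 1-\frac{|S|}{n}+\max_{j\in S}x_j-\min_{j\in S}x_j$. UFS: for every $x$, every nonempty $S\subseteq N$ whose members all report the same location, and $i\in S$: $|x_i-f(x)|\le 1-\frac{|S|}{n}$. IFS: for every $x$ and $i\in N$, $|x_i-f(x)|\le1-\frac1n$. UN: whenever $x_i=c$ for all $i\in N$, $f(x)=c$. *)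

From HB Require Import structures.
From mathcomp Require Import all_boot all_order all_algebra.
From mathcomp Require Import reals.
Set Implicit Arguments. Unset Strict Implicit. Unset Printing Implicit Defensive.
Import Order.TTheory GRing.Theory Num.Theory.
Local Open Scope ring_scope.

Section Owa.
Variables (R : realType) (n : nat).

Definition in_A (a : R) : Prop := 0 <= a <= 1.
Definition profile (x : 'I_n -> R) : Prop := forall i, in_A (x i).

Definition owa_weights (w : 'I_n -> R) : Prop :=
  (forall j, 0 <= w j <= 1) /\ \sum_(j < n) w j = 1.

Definition sorted_reports (x : 'I_n -> R) : seq R :=
  sort <=%R [seq x i | i <- enum 'I_n].

Definition owa (w : 'I_n -> R) (x : 'I_n -> R) : R :=
  \sum_(j < n) w j * nth 0 (sorted_reports x) j.

Definition Proportionality (f : ('I_n -> R) -> R) : Prop :=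
  forall x : 'I_n -> R, (forall i, x i = 0 \/ x i = 1) ->
    f x = #|[set i | x i == 1]|%:R / n%:R.

Definition ProportionalFairness (f : ('I_n -> R) -> R) : Prop :=
  forall x : 'I_n -> R, profile x ->
  forall (S : {set 'I_n}) (i : 'I_n), i \in S ->
    `|x i - f x| <= 1 - #|S|%:R / n%:R
        + (\big[Num.max/x i]_(j in S) x j - \big[Num.min/x i]_(j in S) x j).

Definition UnanimousFairShare (f : ('I_n -> R) -> R) : Prop :=
  forall x : 'I_n -> R, profile x ->
  forall (S : {set 'I_n}), (forall j k, j \in S -> k \in S -> x j = x k) ->
  forall i, i \in S -> `|x i - f x| <= 1 - #|S|%:R / n%:R.

Definition IndividualFairShare (f : ('I_n -> R) -> R) : Prop :=
  forall x : 'I_n -> R, profile x ->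
  forall i, `|x i - f x| <= 1 - 1 / n%:R.

Definition Unanimity (f : ('I_n -> R) -> R) : Prop :=
  forall (x : 'I_n -> R) (c : R), in_A c -> (forall i, x i = c) -> f x = c.

End Owa.

(** An OWA rule averages the order statistics of the reports with weights
    summing to one, so it is unanimous whatever the weights are.  For a
    profile in [0,1]^n the outcome lies between [w_n * max x] and
    [w_1 * min x + (1 - w_1)]; hence an agent at distance more than [1 - 1/n]
    from the outcome can only exist if [w_1 < 1/n] or [w_n < 1/n].
    Proportionality pins both extreme weights down to exactly [1/n]: on the
    profile with a single agent at 0 the outcome is [1 - w_1], and on the
    profile with a single agent at 1 it is [w_n].  Both PF and UFS contain
    IFS as their case of a singleton coalition. *)

From HB Require Import structures.
From mathcomp Require Import all_boot all_order all_algebra.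
From mathcomp Require Import reals.
From mathcomp Require Import zify ring lra.
Set Implicit Arguments.
Unset Strict Implicit.
Unset Printing Implicit Defensive.

Import Order.TTheory GRing.Theory Num.Theory.
Local Open Scope ring_scope.

Section FairShare.
Variables (R : realType) (n : nat) (f : ('I_n -> R) -> R).

Lemma ifs_of_pf : ProportionalFairness f -> IndividualFairShare f.
Proof.
move=> PFf x px i; have := PFf x px [set i] i (set11 i).
by rewrite !big_set1E maxxx minxx cards1 subrr addr0.
Qed.

Lemma ifs_of_ufs : UnanimousFairShare f -> IndividualFairShare f.
Proof.
move=> UFSf x px i; have := UFSf x px [set i] _ i (set11 i); rewrite cards1.
by apply=> j k; rewrite !inE => /eqP -> /eqP ->.
Qed.

End FairShare.

Section SortedReports.
Variables (R : realType) (n : nat).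
Implicit Types (x : 'I_n -> R) (S : {set 'I_n}).

Lemma size_sorted_reports x : size (sorted_reports x) = n.
Proof. by rewrite size_sort size_map size_enum_ord. Qed.

Lemma sorted_reports_sorted x : sorted <=%R (sorted_reports x).
Proof. exact/sort_sorted/le_total. Qed.

Lemma mem_sorted_reports x i : x i \in sorted_reports x.
Proof. by rewrite mem_sort map_f ?mem_enum. Qed.

Lemma nth_sorted_reports x j :
  (j < n)%N -> exists i, nth 0 (sorted_reports x) j = x i.
Proof.
rewrite -[X in (_ < X)%N](size_sorted_reports x) => /(mem_nth 0).
by rewrite mem_sort => /mapP [i _ ->]; exists i.
Qed.

Lemma nth_sorted_reports_in_A x j :
  profile x -> (j < n)%N -> in_A (nth 0 (sorted_reports x) j).
Proof. by move=> px /(nth_sorted_reports x) [i ->]. Qed.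

Lemma sorted_reports_indicator S :
  sorted_reports (fun i => (i \in S)%:R) = nseq (n - #|S|) (0 : R) ++ nseq #|S| 1.
Proof.
set x := fun i => _; set t := _ ++ _.
have sorted_t : sorted <=%R t.
  rewrite (sorted_pairwise le_trans) pairwise_cat; apply/and3P; split.
  - by apply/allrelP => a b /nseqP [-> _] /nseqP [-> _]; rewrite ler01.
  - by elim: (n - #|S|)%N => //= k ->; rewrite all_nseq lexx orbT.
  - by elim: #|S| => //= k ->; rewrite all_nseq lexx orbT.
have card_filter (P : {pred 'I_n}) : size [seq i <- enum 'I_n | P i] = #|P|.
  by rewrite size_filter enumT cardE /enum_mem size_filter.
have map_const (P : {pred 'I_n}) c : {in P, forall i, x i = c} ->
    [seq x i | i <- enum 'I_n & P i] = nseq #|P| c.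
  move=> xc; rewrite -(card_filter P) -(size_map x).
  apply/all_pred1P/allP => y /mapP [i]; rewrite mem_filter => /andP [Pi _] ->.
  by rewrite /= xc.
have split_S : perm_eq (enum 'I_n)
    ([seq i <- enum 'I_n | i \notin S] ++ [seq i <- enum 'I_n | i \in S]).
  by rewrite perm_sym perm_catC perm_filterC.
rewrite -(sorted_sort le_trans sorted_t); apply/perm_sort_leP.
rewrite (perm_trans (perm_map x split_S)) // map_cat.
rewrite (map_const _ 0) => [|i /negbTE]; last by rewrite /x => ->.
rewrite (map_const _ 1) => [|i]; last by rewrite /x => ->.
have -> : #|(fun i => i \notin S)| = (n - #|S|)%N.
  rewrite -[n in (n - _)%N](card_ord n) -(cardsC S) addKn.
  by apply: eq_card => i; rewrite inE.
by have -> : #|[in S]| = #|S| by apply: eq_card.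
Qed.

End SortedReports.

Section Owa.
Variables (R : realType) (n : nat) (w : 'I_n -> R).

Lemma owa_unanimity : \sum_(j < n) w j = 1 -> Unanimity (owa w).
Proof.
move=> wsum x c _ xc; rewrite /owa.
have sc (j : 'I_n) : nth 0 (sorted_reports x) j = c.
  by have [i ->] := nth_sorted_reports x (ltn_ord j).
by under eq_bigr => j _ do rewrite sc; rewrite -mulr_suml wsum mul1r.
Qed.

Lemma owa_indicator (S : {set 'I_n}) :
  owa w (fun i => (i \in S)%:R) = \sum_(j < n | (n - #|S| <= j)%N) w j.
Proof.
rewrite /owa sorted_reports_indicator [RHS]big_mkcond; apply: eq_bigr => j _.
rewrite nth_cat size_nseq !nth_nseq; case: ltnP => [lt_j|le_j]; first by rewrite mulr0.
have := max_card S; rewrite card_ord => le_S.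
by rewrite ifT ?mulr1 //; have := ltn_ord j; lia.
Qed.

Lemma proportional_owa_indicator (S : {set 'I_n}) : Proportionality (owa w) ->
  \sum_(j < n | (n - #|S| <= j)%N) w j = #|S|%:R / n%:R.
Proof.
move=> Pw; rewrite -owa_indicator.
have -> : #|S| = #|[set i | (i \in S)%:R == 1 :> R]|.
  by apply: eq_card => i; rewrite inE; case: (i \in S); rewrite ?eqxx // eq_sym oner_eq0.
by apply: Pw => i; case: (i \in S); [right|left].
Qed.

End Owa.

Section ExtremeWeights.
Variables (R : realType) (m : nat) (w : 'I_m.+1 -> R).
Hypothesis w_weights : owa_weights w.

Lemma proportional_owa_first_weight :
  Proportionality (owa w) -> w ord0 = 1 / m.+1%:R.
Proof.
move=> /(proportional_owa_indicator [set~ ord0]).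
rewrite cardsC1 card_ord subSnn big_mkcond big_ord_recl /= add0r.
have := w_weights.2; rewrite big_ord_recl => wsum tail.
have -> : w ord0 = 1 - m%:R / m.+1%:R by rewrite -tail -[in RHS]wsum addrK.
by field; rewrite addrC natr1 pnatr_eq0.
Qed.

Lemma proportional_owa_last_weight :
  Proportionality (owa w) -> w ord_max = 1 / m.+1%:R.
Proof.
move=> /(proportional_owa_indicator [set ord_max]).
rewrite cards1 subn1 /= (big_pred1 ord_max) // => j /=.
by rewrite -val_eqE /= eqn_leq -[(j <= m)%N]ltnS ltn_ord.
Qed.

Lemma sorted_reports_bounds (x : 'I_m.+1 -> R) i :
  nth 0 (sorted_reports x) 0 <= x i <= nth 0 (sorted_reports x) m.
Proof.
have xi_in := mem_sorted_reports x i; rewrite -(nth_index 0 xi_in).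
have : (index (x i) (sorted_reports x) < m.+1)%N.
  by rewrite -[X in (_ < X)%N](size_sorted_reports x) index_mem.
rewrite ltnS => le_idx; apply/andP; split;
  by apply: (sorted_leq_nth le_trans lexx 0 (sorted_reports_sorted x));
     rewrite ?inE ?size_sorted_reports.
Qed.

Lemma owa_ge_last_weight x :
  profile x -> w ord_max * nth 0 (sorted_reports x) m <= owa w x.
Proof.
move=> px; rewrite /owa big_ord_recr /= lerDr; apply: sumr_ge0 => j _.
have /andP [w_ge0 _] := w_weights.1 (widen_ord (leqnSn m) j).
have /andP [s_ge0 _] := nth_sorted_reports_in_A px (ltn_ord (widen_ord (leqnSn m) j)).
exact: mulr_ge0.
Qed.

Lemma owa_le_first_weight x :
  profile x -> owa w x <= w ord0 * nth 0 (sorted_reports x) 0 + (1 - w ord0).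
Proof.
move=> px; rewrite /owa big_ord_recl /= lerD2l.
have -> : 1 - w ord0 = \sum_(j < m) w (lift ord0 j).
  by rewrite -w_weights.2 big_ord_recl addrC addKr.
apply: ler_sum => j _.
have /andP [w_ge0 _] := w_weights.1 (lift ord0 j).
have /andP [_ s_le1] := nth_sorted_reports_in_A px (ltn_ord (lift ord0 j)).
by rewrite -[leRHS]mulr1 ler_wpM2l.
Qed.

Lemma ifs_of_extreme_weights :
  1 / m.+1%:R <= w ord0 -> 1 / m.+1%:R <= w ord_max ->
  IndividualFairShare (owa w).
Proof.
move=> w0_ge wm_ge x px i.
pose lo := nth 0 (sorted_reports x) 0; pose hi := nth 0 (sorted_reports x) m.
have /andP [lo_le hi_ge] : lo <= x i <= hi := sorted_reports_bounds x i.
have f_ge : w ord_max * hi <= owa w x := owa_ge_last_weight px.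
have f_le : owa w x <= w ord0 * lo + (1 - w ord0) := owa_le_first_weight px.
have /andP [lo_ge0 _] : in_A lo := nth_sorted_reports_in_A px (ltn0Sn m).
have /andP [_ hi_le1] : in_A hi := nth_sorted_reports_in_A px (ltnSn m).
have /andP [_ w0_le1] := w_weights.1 ord0.
have /andP [_ wm_le1] := w_weights.1 ord_max.
have hi_wm : 0 <= (1 - w ord_max) * (1 - hi) by apply: mulr_ge0; rewrite subr_ge0.
have lo_w0 : 0 <= lo * (1 - w ord0) by apply: mulr_ge0; rewrite ?subr_ge0.
(* [lra] only succeeds once [1 / m.+1%:R] is an opaque atom. *)
set c := 1 / _ in w0_ge wm_ge *; clearbody c.
by rewrite ler_norml; apply/andP; split; lra.
Qed.

Lemma ifs_of_proportionality :
  Proportionality (owa w) -> IndividualFairShare (owa w).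
Proof.
move=> Pw; apply: ifs_of_extreme_weights.
- by rewrite proportional_owa_first_weight.
- by rewrite proportional_owa_last_weight.
Qed.

End ExtremeWeights.

Theorem mainTheorem7 (R : realType) (n : nat) (w : 'I_n -> R) :
  (0 < n)%N -> owa_weights w ->
  (Proportionality (owa w) -> IndividualFairShare (owa w)) /\
  (ProportionalFairness (owa w) -> IndividualFairShare (owa w)) /\
  (UnanimousFairShare (owa w) -> IndividualFairShare (owa w)) /\
  (IndividualFairShare (owa w) -> Unanimity (owa w)).
Proof.
move=> n_gt0 w_weights; split; [|split; [|split]].
- by case: n w n_gt0 w_weights => // m w _; apply: ifs_of_proportionality.
- exact: ifs_of_pf.
- exact: ifs_of_ufs.
- by move=> _; apply: owa_unanimity; case: w_weights.
Qed.
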